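(* Let $n\ge 2$, $k\ge 1$, $i_1,\dots,i_k\in\{1,\dots,n-1\}$ and $a_1,\dots,a_k\in\mathbb{Z}$. Then $$V_n(x_{i_1}^{a_1}x_{i_2}^{a_2}\cdots x_{i_k}^{a_k})(s)=\frac{1}{(s^2+1)^k}\sum_{(j_1,\dots,j_k)\in\{0,1\}^k}P^{[a_1]}_{j_1}(s)\cdots P^{[a_k]}_{j_k}(s)\,V_n(x_{i_1}^{j_1}\cdots x_{i_k}^{j_k})(s),$$ where for $a\in\mathbb{Z}$, $P_0^{[a]}(s)=s^{3a}+(-1)^a s^{a+2}$ and $P_1^{[a]}(s)=s^{3a-1}+(-1)^{a+1}s^{a-1}$ (Laurent polynomials in $s$).
   Context: $\mathcal{B}_n$ is the Artin braid group on $n$ strands with standard generators $x_1,\dots,x_{n-1}$ ($x_i$ crosses strands $i$ and $i+1$); $\widehat{\beta}$ denotes the closure of $\beta\in\mathcal{B}_n$, an oriented link. The Jones polynomial $V_L$ of an oriented link $L$ is the Laurent polynomial in $q^{1/2}$ with value $1$ on the unknot satisfying $q^{-1}V_{L_+}-qV_{L_-}=(q^{1/2}-q^{-1/2})V_{L_0}$. One substitutes $s=q^{-1/2}$, so Jones polynomials are Laurent polynomials in $s$. For $\beta\in\mathcal{B}_n$, $V_n(\beta)=V(\widehat{\beta})$. Crossing conventions are those for which, in a braid word, the closures of $\alpha x_i^{e+2}\gamma$, $\alpha x_i^{e+1}\gamma$, $\alpha x_i^{e}\gamma$ play the roles of $L_-,L_0,L_+$ respectively (e.g. $V_2(x_1^2)=-s-s^5$).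 *)

From mathcomp Require Import all_boot all_order all_algebra.
Set Implicit Arguments. Unset Strict Implicit. Unset Printing Implicit Defensive.
Import Order.TTheory GRing.Theory Num.Theory.
Local Open Scope ring_scope.

(* A braid letter (i, b) stands for x_i (if b = true) or x_i^{-1} (b = false),
   with i 1-based: x_i crosses the strands in positions i and i+1. A braid word
   is a sequence of letters, read left to right (top to bottom). *)
Definition letter := (nat * bool)%type.
Definition bword := seq letter.

Definition gpow (i : nat) (a : int) : bword := nseq `|a|%N (i, (0 <= a)%R).

(* The closure diagram of a braid word w on n strands.  Points are
   (t, p) with t in 0..size w (level between crossings t-1 and t) and
   p in 0..n-1 (0-based strand position).  A Kauffman state c assigns to
   crossing t either the vertical ("identity", c_t = false) smoothing or the
   horizontal cup/cap ("e", c_t = true) smoothing.  [kedge] is the resulting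
   adjacency (closure identifies level size w with level 0). *)
Definition kstep (n : nat) (w : bword) (c : seq bool)
    (x y : 'I_(size w).+1 * 'I_n) : bool :=
  let t := nat_of_ord x.1 in let p := nat_of_ord x.2 in
  let t' := nat_of_ord y.1 in let p' := nat_of_ord y.2 in
  let m := size w in
  let i t := (nth (1%N, true) w t).1 in
  let sm t := nth false c t in
  [|| [&& (t < m)%N, ~~ (sm t && ((p == (i t).-1) || (p == i t))),
          t' == t.+1 & p' == p],
      [&& (t < m)%N, sm t, p == (i t).-1, p' == i t & t' == t],
      [&& (0 < t)%N, sm t.-1, p == (i t.-1).-1, p' == i t.-1 & t' == t]
    | [&& t == m, t' == 0%N & p' == p]].

Arguments kstep : clear implicits.

Definition kedge (n : nat) (w : bword) (c : seq bool) :
    rel ('I_(size w).+1 * 'I_n) :=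
  fun x y => kstep n w c x y || kstep n w c y x.

Arguments kedge : clear implicits.

Definition kloops (n : nat) (w : bword) (c : seq bool) : nat :=
  n_comp (kedge n w c) predT.

(* weight of a crossing: includes the writhe normalisation (-A^3)^{-w}
   (up to the global sign) with A^{-2} = s. *)
Definition cross_factor {F : fieldType} (b c : bool) (s : F) : F :=
  if b then (if c then s ^+ 2 else s) else (if c then s ^- 2 else s^-1).

(* Jones polynomial V_n(w)(s) of the closure of the braid word w on n strands,
   computed by the Kauffman bracket state sum with A^{-2} = s,
   V = (-A^3)^{-writhe} <D>, loop value d = -A^2 - A^{-2} = -(s + s^{-1}).
   The sign (-1)^{writhe} equals (-1)^{size w}.  Normalisation: V(unknot) = 1,
   and s^2 V_{L+} - s^{-2} V_{L-} = (s^{-1} - s) V_{L0}, with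
   V_2(x_1^2) = -s - s^5. *)
Definition Vn {F : fieldType} (n : nat) (w : bword) (s : F) : F :=
  (-1) ^+ size w *
  \sum_(c : (size w).-tuple bool)
     (\prod_(t < size w) cross_factor (nth (1%N, true) w t).2 (nth false c t) s)
     * (- (s + s^-1)) ^+ (kloops n w c).-1.

Definition pword (k : nat) (i : 'I_k -> nat) (a : 'I_k -> int) : bword :=
  flatten [seq gpow (i j) (a j) | j <- enum 'I_k].

Definition Pcoef {F : fieldType} (j : bool) (a : int) (s : F) : F :=
  if j then s ^ (3 * a - 1) + (-1) ^ (a + 1) * s ^ (a - 1)
  else s ^ (3 * a) + (-1) ^ a * s ^ (a + 2).

(* Expand the Kauffman state sum over the |a| crossings of a block x_i^a.
   Deleting a vertically smoothed crossing does not change the number of loops,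
   and two horizontally smoothed crossings stacked at the same position enclose
   one extra small loop and otherwise behave like a single one.  Grouping the
   states of the block by their first horizontal crossing therefore gives
   s^a V(u v) plus a geometric sum times the bracket of u x_i v; as
   s^2 + 1 = -s d for the loop value d, clearing denominators yields
   (s^2 + 1) V(u x_i^a v) = P_0^[a] V(u v) + P_1^[a] V(u x_i v), which is
   applied block by block.  The loop counts are compared through an adjunction
   between the two closure graphs that skips the level of the inserted crossing. *)

From mathcomp Require Import all_boot all_order all_algebra.
From mathcomp Require Import zify ring.
Set Implicit Arguments. Unset Strict Implicit. Unset Printing Implicit Defensive.
Import Order.TTheory GRing.Theory Num.Theory.

(* [kstep] with crossing positions and smoothings given as functions of the
   crossing index, so that diagrams differing by one crossing can be related. *)
Definition dstep (m : nat) (I : nat -> nat) (S : nat -> bool) (t q t' q' : nat) : bool :=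
  [|| [&& (t < m)%N, ~~ (S t && ((q == (I t).-1) || (q == I t))), t' == t.+1 & q' == q],
      [&& (t < m)%N, S t, q == (I t).-1, q' == I t & t' == t],
      [&& (0 < t)%N, S t.-1, q == (I t.-1).-1, q' == I t.-1 & t' == t]
    | [&& t == m, t' == 0%N & q' == q]].
Arguments dstep : clear implicits.

Definition dedge N m I S : rel ('I_m.+1 * 'I_N) :=
  fun x y => dstep m I S x.1 x.2 y.1 y.2 || dstep m I S y.1 y.2 x.1 x.2.
Arguments dedge : clear implicits.

Lemma kloops_dedge n w c : kloops n w c =
  n_comp (dedge n (size w) (fun t => (nth (1%N, true) w t).1) (nth false c)) predT.
Proof. by []. Qed.

Lemma dedge_sym N m I S : connect_sym (dedge N m I S).
Proof. by apply: sym_connect_sym => x y; rewrite /dedge orbC. Qed.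

Variant dstep_spec m I S t q t' q' : Prop :=
 | DStepThrough of (t < m)%N & ~~ (S t && ((q == (I t).-1) || (q == I t)))
     & t' = t.+1 & q' = q
 | DStepCap of (t < m)%N & S t & q = (I t).-1 & q' = I t & t' = t
 | DStepCup of (0 < t)%N & S t.-1 & q = (I t.-1).-1 & q' = I t.-1 & t' = t
 | DStepWrap of t = m & t' = 0%N & q' = q.

Lemma dstepP m I S t q t' q' : dstep m I S t q t' q' -> dstep_spec m I S t q t' q'.
Proof.
case/or4P.
- by case/and4P=> ? ? /eqP ? /eqP ?; apply: DStepThrough.
- by case/and5P=> ? ? /eqP ? /eqP ? /eqP ?; apply: DStepCap.
- by case/and5P=> ? ? /eqP ? /eqP ? /eqP ?; apply: DStepCup.
- by case/and3P=> /eqP ? /eqP ? /eqP ?; apply: DStepWrap.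
Qed.

Section DiagramSteps.
Variables (m : nat) (I : nat -> nat) (S : nat -> bool).

Lemma dstep_through t q t' q' : (t < m)%N ->
  ~~ (S t && ((q == (I t).-1) || (q == I t))) -> t' = t.+1 -> q' = q ->
  dstep m I S t q t' q'.
Proof. by move=> h1 h2 -> ->; rewrite /dstep h1 h2 !eqxx. Qed.

Lemma dstep_cap t q t' q' : (t < m)%N -> S t -> q = (I t).-1 -> q' = I t -> t' = t ->
  dstep m I S t q t' q'.
Proof. by move=> h1 h2 -> -> ->; rewrite /dstep h1 h2 !eqxx !orbT. Qed.

Lemma dstep_cup t q t' q' : (0 < t)%N -> S t.-1 -> q = (I t.-1).-1 -> q' = I t.-1 ->
  t' = t -> dstep m I S t q t' q'.
Proof. by move=> h1 h2 -> -> ->; rewrite /dstep h1 h2 !eqxx !orbT. Qed.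

Lemma dstep_wrap t q t' q' : t = m -> t' = 0%N -> q' = q -> dstep m I S t q t' q'.
Proof. by move=> -> -> ->; rewrite /dstep !eqxx !orbT. Qed.

End DiagramSteps.

Definition vtx nn m (t q : nat) : 'I_m.+1 * 'I_nn.+1 := (inord t, inord q).
Arguments vtx : clear implicits.

Lemma vtx_val nn m (x : 'I_m.+1 * 'I_nn.+1) : x = vtx nn m x.1 x.2.
Proof. by case: x => a b; rewrite /vtx !inord_val. Qed.

Section ConnectStep.
Variables (nn m : nat) (I : nat -> nat) (S : nat -> bool) (t q t' q' : nat).
Hypotheses (ht : (t <= m)%N) (hq : (q <= nn)%N) (ht' : (t' <= m)%N) (hq' : (q' <= nn)%N).

Lemma connect_dstep : dstep m I S t q t' q' ->
  connect (dedge nn.+1 m I S) (vtx nn m t q) (vtx nn m t' q').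
Proof. by move=> h; apply: connect1; rewrite /dedge /vtx /= !inordK // h. Qed.

Lemma connect_dstep_rev : dstep m I S t' q' t q ->
  connect (dedge nn.+1 m I S) (vtx nn m t q) (vtx nn m t' q').
Proof. by move=> h; apply: connect1; rewrite /dedge /vtx /= !inordK // h orbT. Qed.

End ConnectStep.

Lemma bump_lt h t : (t < h)%N -> bump h t = t.
Proof. by move=> th; rewrite /bump leqNgt th. Qed.

Lemma bump_ge h t : (h <= t)%N -> bump h t = t.+1.
Proof. by rewrite /bump => ->. Qed.

Lemma unbump_le h t : (t <= h)%N -> unbump h t = t.
Proof. by move=> th; rewrite /unbump ltnNge th subn0. Qed.

Lemma unbump_gt h t : (h < t)%N -> unbump h t = t.-1.
Proof. by rewrite /unbump => ->; rewrite subn1. Qed.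

Lemma unbump_bumpS h t : unbump h (bump h.+1 t) = t.
Proof.
have [th|ht] := leqP t h; first by rewrite bump_lt ?unbump_le.
by rewrite bump_ge // unbump_gt // ltnW.
Qed.

Lemma shift_pred (T : Type) (f f' : nat -> T) p :
  (forall t, (p <= t)%N -> f' t.+1 = f t) -> forall t, (p < t)%N -> f' t = f t.-1.
Proof. by move=> hf [|t] // ht; rewrite hf. Qed.

(* The diagram (I', S') is (I, S) with one extra crossing inserted at index p;
   if that crossing is smoothed horizontally, it must directly precede a
   horizontally smoothed crossing at the same position. *)
Section InsertCrossing.
Variables (nn m p : nat) (I I' : nat -> nat) (S S' : nat -> bool).
Hypotheses (Hp : (p <= m)%N)
  (HIl : forall t, (t < p)%N -> I' t = I t) (HSl : forall t, (t < p)%N -> S' t = S t)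
  (HIr : forall t, (p <= t)%N -> I' t.+1 = I t) (HSr : forall t, (p <= t)%N -> S' t.+1 = S t)
  (Hext : S' p -> [&& (p < m)%N, S p & I' p == I p]).

Local Notation big := (dedge nn.+1 m.+1 I' S').
Local Notation small := (dedge nn.+1 m I S).

Let HIg := shift_pred HIr.
Let HSg := shift_pred HSr.

Lemma through_inserted q : ~~ (S p && ((q == (I p).-1) || (q == I p))) ->
  ~~ (S' p && ((q == (I' p).-1) || (q == I' p))).
Proof. by case: (boolP (S' p)) => // /Hext /and3P[_ -> /eqP ->]. Qed.

Definition raise (x : 'I_m.+1 * 'I_nn.+1) := vtx nn m.+1 (bump p.+1 x.1) x.2.
Definition lower (x : 'I_m.+2 * 'I_nn.+1) := vtx nn m (unbump p x.1) x.2.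

Lemma raise_level x : ((raise x).1 : nat) = bump p.+1 x.1.
Proof. rewrite /= inordK //; have := ltn_ord x.1; rewrite /bump; case: ltnP => /=; lia. Qed.

Lemma raiseK : cancel raise lower.
Proof.
move=> x; rewrite /lower raise_level unbump_bumpS.
by rewrite /raise /vtx /= !inord_val -surjective_pairing.
Qed.

Lemma connect_across_inserted q : (q <= nn)%N ->
  ~~ (S' p && ((q == (I' p).-1) || (q == I' p))) ->
  connect big (vtx nn m.+1 p q) (vtx nn m.+1 p.+1 q).
Proof. by move=> hq h; apply: connect_dstep; try lia; apply: dstep_through => //; lia. Qed.

Lemma connect_raise_step t q t' q' :
  (t <= m)%N -> (q <= nn)%N -> (t' <= m)%N -> (q' <= nn)%N -> dstep m I S t q t' q' ->
  connect big (vtx nn m.+1 (bump p.+1 t) q) (vtx nn m.+1 (bump p.+1 t') q').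
Proof.
move=> ht hq ht' hq'.
case/dstepP=> [h1 h2 e1 e2 | h1 h2 e1 e2 e3 | h1 h2 e1 e2 e3 | -> -> ->];
  try subst t' q'; try subst q.
- have [tp|pt|et] := ltngtP t p.
  + rewrite !bump_lt; try lia; apply: connect_dstep; try lia.
    by apply: dstep_through; rewrite ?HSl ?HIl //; lia.
  + rewrite !bump_ge; try lia; apply: connect_dstep; try lia.
    by apply: dstep_through; rewrite ?HSr ?HIr //; lia.
  + subst t; rewrite bump_lt ?bump_ge; try lia.
    apply: connect_trans (connect_across_inserted hq (through_inserted h2)) _.
    by apply: connect_dstep; try lia; apply: dstep_through; rewrite ?HSr ?HIr //; lia.
- have [tp|pt|et] := ltngtP t p.
  + rewrite bump_lt; try lia; apply: connect_dstep; try lia.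
    by apply: dstep_cap; rewrite ?HSl ?HIl //; lia.
  + rewrite bump_ge; try lia; apply: connect_dstep; try lia.
    by apply: dstep_cap; rewrite ?HSr ?HIr //; lia.
  + subst t; rewrite bump_lt //; case: (boolP (S' p)) => HS'p.
    * have /and3P[_ _ /eqP HI'p] := Hext HS'p.
      by apply: connect_dstep; try lia; apply: dstep_cap; rewrite ?HI'p //; lia.
    * have across q : (q <= nn)%N -> connect big (vtx nn m.+1 p q) (vtx nn m.+1 p.+1 q).
        by move=> hq0; apply: connect_across_inserted; rewrite ?(negbTE HS'p).
      apply: connect_trans (across _ hq) _; rewrite dedge_sym.
      apply: connect_trans (across _ hq') _.
      by apply: connect_dstep_rev; try lia; apply: dstep_cap; rewrite ?HSr ?HIr //; lia.
- have [tp|pt] := leqP t p.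
  + rewrite bump_lt; try lia; apply: connect_dstep; try lia.
    by apply: dstep_cup; rewrite ?HSl ?HIl //; lia.
  + rewrite bump_ge; try lia; apply: connect_dstep; try lia.
    by apply: dstep_cup => //=; rewrite ?HSg ?HIg //; lia.
- rewrite (@bump_lt _ 0) //; have [mp|pm] := leqP m p.
  + have em : m = p by lia.
    have /negbTE HS'p : ~~ S' p by apply/negP => /Hext; rewrite -em ltnn.
    rewrite [in bump _ m]em bump_lt //.
    apply: connect_trans (connect_across_inserted hq _) _; first by rewrite HS'p.
    by apply: connect_dstep; try lia; apply: dstep_wrap; lia.
  + by rewrite bump_ge; try lia; apply: connect_dstep; try lia; apply: dstep_wrap.
Qed.

Lemma connect_lower_step t q t' q' :
  (t <= m.+1)%N -> (q <= nn)%N -> (t' <= m.+1)%N -> (q' <= nn)%N ->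
  dstep m.+1 I' S' t q t' q' ->
  connect small (vtx nn m (unbump p t) q) (vtx nn m (unbump p t') q').
Proof.
move=> ht hq ht' hq'.
case/dstepP=> [h1 h2 e1 e2 | h1 h2 e1 e2 e3 | h1 h2 e1 e2 e3 | -> -> ->];
  try subst t' q'; try subst q.
- have [tp|pt|et] := ltngtP t p.
  + rewrite (HSl tp) (HIl tp) in h2.
    rewrite !unbump_le; try lia; apply: connect_dstep; try lia.
    by apply: dstep_through => //; lia.
  + rewrite (HSg pt) (HIg pt) in h2.
    rewrite !unbump_gt; try lia; apply: connect_dstep; try lia.
    by apply: dstep_through => //; lia.
  + by subst t; rewrite unbump_le ?unbump_gt //= connect0.
- have [tp|pt|et] := ltngtP t p.
  + rewrite (HSl tp) in h2; rewrite (HIl tp) in hq hq' *.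
    rewrite unbump_le; try lia; apply: connect_dstep; try lia.
    by apply: dstep_cap => //; lia.
  + rewrite (HSg pt) in h2; rewrite (HIg pt) in hq hq' *.
    rewrite unbump_gt; try lia; apply: connect_dstep; try lia.
    by apply: dstep_cap => //; lia.
  + subst t; have /and3P[hpm HSp /eqP HI'p] := Hext h2.
    rewrite HI'p in hq hq' *; rewrite unbump_le //; apply: connect_dstep; try lia.
    by apply: dstep_cap.
- have [tp|pt|et] := ltngtP t p.+1.
  + have tp' : (t.-1 < p)%N by lia.
    rewrite (HSl tp') in h2; rewrite (HIl tp') in hq hq' *.
    rewrite unbump_le; try lia; apply: connect_dstep; try lia.
    by apply: dstep_cup => //; lia.
  + have tp' : (p < t.-1)%N by lia.
    rewrite (HSg tp') in h2; rewrite (HIg tp') in hq hq' *.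
    rewrite unbump_gt; try lia; apply: connect_dstep; try lia.
    by apply: dstep_cup => //; lia.
  + subst t; have /and3P[hpm HSp /eqP HI'p] := Hext h2.
    rewrite /= HI'p in hq hq' *; rewrite unbump_gt //; apply: connect_dstep; try lia.
    by apply: dstep_cap.
- rewrite unbump_gt ?unbump_le //; apply: connect_dstep; try lia.
  exact: dstep_wrap.
Qed.

Lemma connect_raise x y : small x y -> connect big (raise x) (raise y).
Proof.
by case/orP=> e; [|rewrite dedge_sym]; apply: connect_raise_step e;
  rewrite -ltnS ltn_ord.
Qed.

Lemma connect_lower x y : big x y -> connect small (lower x) (lower y).
Proof.
by case/orP=> e; [|rewrite dedge_sym]; apply: connect_lower_step e;
  rewrite -ltnS ltn_ord.
Qed.

Lemma connect_raise_lower (x : 'I_m.+2 * 'I_nn.+1) :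
  ((x.1 : nat) == p.+1) ==> ~~ (S' p && ((x.2 == (I' p).-1 :> nat) || (x.2 == I' p :> nat))) ->
  connect big x (raise (lower x)).
Proof.
move=> hx; have h1 := ltn_ord x.1; have h2 := ltn_ord x.2.
have hu : (unbump p x.1 < m.+1)%N by rewrite /unbump; case: ltnP => /=; lia.
rewrite /raise /lower /vtx /= (inordK hu).
have [lt|gt|eq] := ltngtP x.1 p.+1.
- rewrite unbump_le ?bump_lt; try lia.
  by rewrite !inord_val -surjective_pairing connect0.
- rewrite unbump_gt ?bump_ge ?prednK; try lia.
  by rewrite !inord_val -surjective_pairing connect0.
- rewrite eq unbump_gt ?bump_lt //=; rewrite eq eqxx /= in hx.
  rewrite [x in connect _ x](vtx_val x) eq inord_val dedge_sym.
  by apply: connect_across_inserted; rewrite // -ltnS.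
Qed.

Section InsertIdentity.
Hypothesis HS'p : S' p = false.

Lemma n_comp_insert_id : n_comp big predT = n_comp small predT.
Proof.
rewrite (@adjunction_n_comp _ _ lower small big (@dedge_sym _ _ _ _) (@dedge_sym _ _ _ _)) //.
apply: (@intro_adjunction _ _ lower small big (@dedge_sym _ _ _ _) predT _ (fun x _ => raise x))
  => //.
- move=> x ax; split=> [|y ay]; first by rewrite raiseK connect0.
  exact: connect_raise.
- move=> x ax; split; last exact: connect_lower.
  by apply: connect_raise_lower; rewrite HS'p implybT.
Qed.

End InsertIdentity.

Section InsertCap.
Hypotheses (HS'p : S' p) (HIp : (0 < I p <= nn)%N).

(* The small circle enclosed by the two stacked horizontal smoothings. *)
Definition ee_loop := [pred x : 'I_m.+2 * 'I_nn.+1 |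
  ((x.1 : nat) == p.+1) && ((x.2 == (I p).-1 :> nat) || (x.2 == I p :> nat))].

Lemma ee_loop_step t q t' q' : t = p.+1 -> (q == (I p).-1) || (q == I p) ->
  dstep m.+1 I' S' t q t' q' || dstep m.+1 I' S' t' q' t q ->
  (t' == p.+1) && ((q' == (I p).-1) || (q' == I p)).
Proof.
have /and3P[hpm HSp /eqP HI'p] := Hext HS'p.
move=> -> hq /orP[] /dstepP[h1 h2 e1 e2 | h1 h2 e1 e2 e3 | h1 h2 e1 e2 e3 | e1 e2 e3];
  try lia; subst.
- by move: h2; rewrite HSr // HIr // HSp hq.
- by rewrite HIr // !eqxx orbT.
- by rewrite /= HI'p !eqxx orbT.
- have et : t' = p by lia.
  by subst t'; move: h2; rewrite HS'p HI'p hq.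
- by rewrite HIr // !eqxx.
- by rewrite /= HI'p !eqxx.
Qed.

Lemma closed_ee_loop : closed big ee_loop.
Proof.
apply: intro_closed; first exact: dedge_sym.
by move=> x y e /andP[/eqP hx hq]; apply: ee_loop_step hx hq e.
Qed.

Lemma raise_notin_ee_loop x : raise x \notin ee_loop.
Proof. by rewrite inE raise_level /bump negb_and; case: ltnP => /=; lia. Qed.

Lemma n_comp_insert_ee : n_comp big predT = (n_comp small predT).+1.
Proof.
have /and3P[hpm HSp /eqP HI'p] := Hext HS'p.
pose z0 := vtx nn m.+1 p.+1 (I p).-1.
have z0_loop : z0 \in ee_loop by rewrite inE /z0 /vtx /= !inordK ?eqxx //; lia.
pose a := [predC connect big z0].
have cla : closed big a := predC_closed (connect_closed (@dedge_sym _ _ _ _) z0).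
have -> : n_comp big predT = n_comp big (connect big z0) + n_comp big a.
  by rewrite -n_compC; apply: eq_n_comp_r => x; rewrite !inE.
rewrite n_comp_connect ?add1n; last exact: dedge_sym.
congr _.+1.
rewrite (@adjunction_n_comp _ _ raise big small (@dedge_sym _ _ _ _) (@dedge_sym _ _ _ _) a cla).
  apply: eq_n_comp_r => x; rewrite !inE.
  apply/negP => /(closed_connect closed_ee_loop); rewrite z0_loop => /esym.
  by rewrite (negbTE (raise_notin_ee_loop x)).
apply: (@intro_adjunction _ _ raise big small (@dedge_sym _ _ _ _) a cla (fun x _ => lower x)).
- move=> x ax; split; last by move=> y ay; exact: connect_lower.
  apply: connect_raise_lower; apply/implyP => /eqP hx.
  rewrite HS'p HI'p /=; apply/negP => hq.
  move: ax; rewrite !inE => /negP; apply.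
  rewrite (vtx_val x) hx /z0; case/orP: hq => /eqP ->; first exact: connect0.
  by apply: connect_dstep; try lia; apply: dstep_cap; rewrite ?HSr ?HIr //; lia.
- move=> x ax; split; last exact: connect_raise.
  by rewrite raiseK connect0.
Qed.

End InsertCap.

End InsertCrossing.

Lemma kloops_insert_id nn (u v : bword) x (cu cv : seq bool) : size cu = size u ->
  kloops nn.+1 (u ++ x :: v) (cu ++ false :: cv) = kloops nn.+1 (u ++ v) (cu ++ cv).
Proof.
move=> hc; rewrite !kloops_dedge.
have -> : size (u ++ x :: v) = (size (u ++ v)).+1 by rewrite !size_cat addnS.
have HS'p : nth false (cu ++ false :: cv) (size u) = false by rewrite nth_cat hc ltnn subnn.
apply: (@n_comp_insert_id nn _ (size u)); rewrite ?HS'p //.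
- by rewrite size_cat leq_addr.
- by move=> t ht; rewrite !nth_cat ht.
- by move=> t ht; rewrite !nth_cat hc ht.
- by move=> t ht; rewrite !nth_cat ltnNge (leqW ht) /= ltnNge ht /= subSn.
- by move=> t ht; rewrite !nth_cat hc ltnNge (leqW ht) /= ltnNge ht /= subSn.
Qed.

Lemma kloops_insert_ee nn (u v : bword) x y (cu cv : seq bool) : size cu = size u ->
  y.1 = x.1 -> (0 < x.1 <= nn)%N ->
  kloops nn.+1 (u ++ x :: y :: v) (cu ++ true :: true :: cv) =
  (kloops nn.+1 (u ++ x :: v) (cu ++ true :: cv)).+1.
Proof.
move=> hc hy hx; rewrite !kloops_dedge.
have -> : size (u ++ x :: y :: v) = (size (u ++ x :: v)).+1 by rewrite !size_cat addnS.
have nth_u (T : Type) (z0 z : T) (s1 s2 : seq T) :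
    size s1 = size u -> nth z0 (s1 ++ z :: s2) (size u) = z.
  by move=> <-; rewrite nth_cat ltnn subnn.
apply: (@n_comp_insert_ee nn _ (size u)); rewrite ?nth_u //.
- by rewrite size_cat leq_addr.
- by move=> t ht; rewrite !nth_cat ht.
- by move=> t ht; rewrite !nth_cat hc ht.
- move=> t ht; rewrite !nth_cat ltnNge (leqW ht) /= ltnNge ht /= subSn //.
  by case: (t - size u)%N => //=; rewrite hy.
- by move=> t ht; rewrite !nth_cat hc ltnNge (leqW ht) /= ltnNge ht /= subSn.
- by rewrite size_cat /= addnS ltnS leq_addr eqxx.
Qed.

Lemma kloops_gt0 nn w c : (0 < kloops nn.+1 w c)%N.
Proof.
rewrite /kloops /n_comp_mem; apply/card_gt0P.
pose x : 'I_(size w).+1 * 'I_nn.+1 := (ord0, ord0).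
exists (fingraph.root (kedge nn.+1 w c) x); rewrite !inE andbT.
by apply: roots_root; apply: sym_connect_sym => a b; rewrite /kedge orbC.
Qed.

Lemma eq_kloops nn w w' c : size w = size w' ->
  (forall t, (nth (1%N, true) w t).1 = (nth (1%N, true) w' t).1) ->
  kloops nn w c = kloops nn w' c.
Proof.
move=> hs hI; rewrite !kloops_dedge hs; apply: eq_n_comp => x y.
by apply: eq_connect => a b; rewrite /dedge /dstep !hI.
Qed.

Local Open Scope ring_scope.

Section BoolSums.
Variable R : comNzRingType.

Fixpoint bsum (m : nat) (G : seq bool -> R) : R :=
  if m is m'.+1 then bsum m' (fun c => G (false :: c)) + bsum m' (fun c => G (true :: c))
  else G [::].

Lemma eq_bsum m G H : (forall c, size c = m -> G c = H c) -> bsum m G = bsum m H.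
Proof.
elim: m G H => [|m IH] G H h /=; first by rewrite h.
by congr (_ + _); apply: IH => c hc; rewrite h //= hc.
Qed.

Lemma bsumD m G H : bsum m (fun c => G c + H c) = bsum m G + bsum m H.
Proof. by elim: m G H => [|m IH] G H //=; rewrite !IH addrACA. Qed.

Lemma mulr_bsumr m k G : k * bsum m G = bsum m (fun c => k * G c).
Proof. by elim: m G => [|m IH] G //=; rewrite mulrDr !IH. Qed.

Lemma bsum_cat m1 m2 G :
  bsum (m1 + m2) G = bsum m1 (fun c1 => bsum m2 (fun c2 => G (c1 ++ c2))).
Proof. by elim: m1 G => [|m1 IH] G //=; rewrite !IH. Qed.

Lemma sum_tuple_bsum m (G : seq bool -> R) : \sum_(c : m.-tuple bool) G c = bsum m G.
Proof.
elim: m G => [|m IH] G /=.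
  rewrite (eq_bigr (fun _ => G [::])); last by move=> c _; rewrite tuple0.
  by rewrite sumr_const card_tuple expn0.
pose f (p : bool * m.-tuple bool) : m.+1.-tuple bool := [tuple of p.1 :: p.2].
pose g (t : m.+1.-tuple bool) := (thead t, behead_tuple t).
have fK : cancel f g by case=> b t; rewrite /f /g theadE; congr pair; apply: val_inj.
have gK : cancel g f.
  by move=> t; apply: val_inj; rewrite /= [in RHS](tuple_eta t).
rewrite (reindex f); last by exists g => x _; [apply: fK | apply: gK].
rewrite -(pair_big xpredT xpredT (fun b t => G (b :: tval t))) /= big_bool /=.
by rewrite (IH (fun c => G (true :: c))) (IH (fun c => G (false :: c))) addrC.
Qed.

Lemma sum_ffun_bsum k (G : seq bool -> R) :
  \sum_(e : {ffun 'I_k -> bool}) G [seq e j | j <- enum 'I_k] = bsum k G.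
Proof.
rewrite -sum_tuple_bsum (reindex (fun c : k.-tuple bool => [ffun j => tnth c j])).
  apply: eq_bigr => c _; congr G; rewrite -[RHS](map_tnth_enum c).
  by apply: eq_map => j; rewrite ffunE.
exists (fun e : {ffun 'I_k -> bool} => [tuple e j | j < k]) => x _.
  by apply: eq_from_tnth => j; rewrite tnth_mktuple ffunE.
by apply/ffunP => j; rewrite ffunE tnth_mktuple.
Qed.

Definition wprod (ws : seq (bool -> R)) (c : seq bool) : R :=
  \prod_(p <- zip ws c) p.1 p.2.

Lemma wprod_cat w1 w2 c1 c2 : size c1 = size w1 ->
  wprod (w1 ++ w2) (c1 ++ c2) = wprod w1 c1 * wprod w2 c2.
Proof. by move=> h; rewrite /wprod zip_cat ?big_cat. Qed.

Lemma wprod_cons g ws b c : wprod (g :: ws) (b :: c) = g b * wprod ws c.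
Proof. by rewrite /wprod /= big_cons. Qed.

Lemma wprod_map (T : Type) (x0 : T) (f : T -> bool -> R) (w : seq T) c : size c = size w ->
  wprod (map f w) c = \prod_(t < size w) f (nth x0 w t) (nth false c t).
Proof.
elim: w c => [|x w IH] [|b c] //=; first by rewrite big_ord0 /wprod big_nil.
by move=> [] /IH h; rewrite wprod_cons big_ord_recl /= h.
Qed.

End BoolSums.

Definition blockword k (ib : nat -> nat) (ab : nat -> int) : bword :=
  flatten [seq gpow (ib j) (ab j) | j <- iota 0 k].

Lemma blockwordS k ib ab :
  blockword k.+1 ib ab = gpow (ib 0%N) (ab 0%N) ++ blockword k (ib \o succn) (ab \o succn).
Proof.
rewrite /blockword /= -[1%N]/(1 + 0)%N iotaDl -map_comp /=.
by congr (_ ++ flatten _); apply: eq_map.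
Qed.

Lemma pword_blockword k (i : 'I_k -> nat) a (ib : nat -> nat) (ab : nat -> int) :
  (forall j : 'I_k, ib j = i j) -> (forall j : 'I_k, ab j = a j) -> pword i a = blockword k ib ab.
Proof.
move=> hi ha; rewrite /pword /blockword -val_enum_ord -map_comp; congr flatten.
by apply: eq_map => j /=; rewrite hi ha.
Qed.

Section Bracket.
Variables (F : fieldType) (s : F) (nn : nat).

Let d := - (s + s^-1).

Definition weight (x : letter) (b : bool) : F := cross_factor x.2 b s.

Definition weights (w : bword) := map weight w.

Lemma size_weights w : size (weights w) = size w.
Proof. exact: size_map. Qed.

Definition bracket n (w : bword) (ws : seq (bool -> F)) : F :=
  bsum (size w) (fun c => wprod ws c * d ^+ (kloops n w c).-1).

Definition bracket_at n u x v wu wv (b : bool) : F :=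
  bsum (size u) (fun cu => bsum (size v) (fun cv =>
     wprod wu cu * wprod wv cv * d ^+ (kloops n (u ++ x :: v) (cu ++ b :: cv)).-1)).

Lemma Vn_bracket n w : Vn n w s = (-1) ^+ size w * bracket n w (weights w).
Proof.
rewrite /Vn /bracket -sum_tuple_bsum; congr (_ * _); apply: eq_bigr => c _.
by rewrite /weights (wprod_map (1%N, true)) ?size_tuple.
Qed.

Lemma bracket_expand n u x v wu g wv : size wu = size u ->
  bracket n (u ++ x :: v) (wu ++ g :: wv) =
  g false * bracket_at n u x v wu wv false + g true * bracket_at n u x v wu wv true.
Proof.
move=> hw; rewrite /bracket /bracket_at size_cat bsum_cat !mulr_bsumr -bsumD.
apply: eq_bsum => cu hcu /=.
rewrite !mulr_bsumr; congr (_ + _); apply: eq_bsum => cv _;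
  rewrite wprod_cat ?hw // wprod_cons; ring.
Qed.

Lemma bracket_at_id u x v wu wv : size wu = size u ->
  bracket_at nn.+1 u x v wu wv false = bracket nn.+1 (u ++ v) (wu ++ wv).
Proof.
move=> hw; rewrite /bracket /bracket_at size_cat bsum_cat.
apply: eq_bsum => cu hcu; apply: eq_bsum => cv _.
by rewrite wprod_cat ?hw // kloops_insert_id.
Qed.

Lemma bracket_at_ee u x y v wu g wv : size wu = size u ->
  y.1 = x.1 -> (0 < x.1 <= nn)%N ->
  bracket_at nn.+1 u x (y :: v) wu (g :: wv) true =
  (g false + g true * d) * bracket_at nn.+1 u x v wu wv true.
Proof.
move=> hw hy hx; rewrite /bracket_at mulr_bsumr; apply: eq_bsum => cu hcu /=.
rewrite mulrDl !mulr_bsumr; congr (_ + _); apply: eq_bsum => cv _; rewrite !wprod_cons.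
  have := @kloops_insert_id nn (rcons u x) v y (rcons cu true) cv.
  by rewrite !cat_rcons !size_rcons hcu => ->; ring.
rewrite kloops_insert_ee // -(prednK (kloops_gt0 nn (u ++ x :: v) (cu ++ true :: cv))).
by rewrite exprS; ring.
Qed.

Lemma bracket_at_ee_nseq u x y v wu g wv m : size wu = size u ->
  y.1 = x.1 -> (0 < x.1 <= nn)%N ->
  bracket_at nn.+1 u x (nseq m y ++ v) wu (nseq m g ++ wv) true =
  (g false + g true * d) ^+ m * bracket_at nn.+1 u x v wu wv true.
Proof.
move=> hw hy hx; elim: m => [|m IH]; first by rewrite expr0 mul1r.
by rewrite /= bracket_at_ee // IH exprS mulrA.
Qed.

Lemma bracket_at_sign u i b b' v wu wv :
  bracket_at nn.+1 u (i, b) v wu wv true = bracket_at nn.+1 u (i, b') v wu wv true.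
Proof.
rewrite /bracket_at; apply: eq_bsum => cu _; apply: eq_bsum => cv _.
rewrite (@eq_kloops nn.+1 (u ++ (i, b) :: v) (u ++ (i, b') :: v)) ?size_cat //.
by move=> t; rewrite !nth_cat; case: ifP => // _; case: (t - size u)%N.
Qed.

(* Total weight of the states of a block of m crossings with some horizontal
   smoothing: after the first horizontal crossing, each further one is either
   deleted (vertical) or closes a small loop (horizontal). *)
Fixpoint block_coef (gF gT : F) m : F :=
  if m is m'.+1 then gF * block_coef gF gT m' + gT * (gF + gT * d) ^+ m' else 0.

Lemma bracket_block u v i b m : (0 < i <= nn)%N ->
  bracket nn.+1 (u ++ nseq m (i, b) ++ v) (weights (u ++ nseq m (i, b) ++ v)) =
  weight (i, b) false ^+ m * bracket nn.+1 (u ++ v) (weights (u ++ v)) +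
  block_coef (weight (i, b) false) (weight (i, b) true) m *
    bracket_at nn.+1 u (i, true) v (weights u) (weights v) true.
Proof.
move=> hi; elim: m => [|m IH]; first by rewrite /= expr0 mul1r mul0r addr0.
have wcat w1 w2 : weights (w1 ++ w2) = weights w1 ++ weights w2 by exact: map_cat.
have wnseq : weights (nseq m (i, b) ++ v) = nseq m (weight (i, b)) ++ weights v.
  by rewrite wcat /weights map_nseq.
rewrite [nseq m.+1 _ ++ _]/= wcat [weights (_ :: _)]/=.
rewrite bracket_expand ?size_weights // bracket_at_id ?size_weights // -wcat IH.
rewrite wnseq bracket_at_ee_nseq ?size_weights // (bracket_at_sign u i b true).
by rewrite [block_coef _ _ m.+1]/= exprS; ring.
Qed.

Hypotheses (hs : s != 0) (hs2 : s ^+ 2 + 1 != 0).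

Lemma block_coef_closed gF gT m :
  (s ^+ 2 + 1) * block_coef gF gT m = - s * ((gF + gT * d) ^+ m - gF ^+ m).
Proof.
have hd : s ^+ 2 + 1 = - s * d by rewrite /d; field.
elim: m => [|m IH] /=; first by rewrite !expr0 subrr !mulr0.
rewrite mulrDr mulrCA IH hd !exprS; ring.
Qed.

Lemma sign_absz (a : int) : (-1) ^+ `|a|%N = (-1 : F) ^ a.
Proof. by case: a => m //=; rewrite /exprz -exprVn invrN1. Qed.

Lemma cross_id_absz (a : int) : cross_factor (0 <= a) false s ^+ `|a|%N = s ^ a.
Proof. by case: a => m //=; rewrite /exprz -exprVn. Qed.

Lemma cross_loop_absz (a : int) :
  (cross_factor (0 <= a) false s + cross_factor (0 <= a) true s * d) ^+ `|a|%N =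
  (-1) ^+ `|a|%N * (s ^ a) ^+ 3.
Proof.
case: a => m /=.
  have -> : s + s ^+ 2 * d = -1 * s ^+ 3 by rewrite /d; field.
  by rewrite exprMn -!exprM mulnC.
have -> : s^-1 + s ^- 2 * d = -1 * s^-1 ^+ 3 by rewrite /d; field.
by rewrite exprMn /exprz -exprVn -!exprM mulnC.
Qed.

Lemma Pcoef0E a : Pcoef false a s = (s ^ a) ^+ 3 + (-1) ^ a * (s ^ a * s ^+ 2).
Proof. by rewrite /Pcoef (@expfzDr _ s a 2 hs) [3 * a]mulrC -exprz_exp. Qed.

Lemma Pcoef1E a : Pcoef true a s = (s ^ a) ^+ 3 * s^-1 - (-1) ^ a * (s ^ a * s^-1).
Proof.
rewrite /Pcoef (@expfzDr _ s (3 * a) (-1) hs) [3 * a]mulrC -exprz_exp.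
rewrite (@expfzDr _ (-1) a 1) ?oppr_eq0 ?oner_eq0 // expr1z mulrN1 (@expfzDr _ s a (-1) hs).
by rewrite mulNr.
Qed.

Lemma Vn_gpow u v i (a : int) : (0 < i <= nn)%N ->
  (s ^+ 2 + 1) * Vn nn.+1 (u ++ gpow i a ++ v) s =
  Pcoef false a s * Vn nn.+1 (u ++ v) s + Pcoef true a s * Vn nn.+1 (u ++ (i, true) :: v) s.
Proof.
move=> hi; have hx := bracket_block u v true 1 hi.
rewrite /= expr1 expr0 mulr0 add0r mulr1 in hx.
rewrite !Vn_bracket hx /gpow bracket_block // Pcoef0E Pcoef1E.
have hb := block_coef_closed (weight (i, 0 <= a) false) (weight (i, 0 <= a) true) `|a|%N.
rewrite /weight /= cross_id_absz cross_loop_absz in hb *.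
rewrite -sign_absz !size_cat size_nseq /= !exprD [(-1) ^+ (size v).+1]exprS.
rewrite -(@signr_odd F `|a|%N) in hb *.
move: hb; move: (s ^ a) (block_coef _ _ _) (bracket _ _ _) (bracket_at _ _ _ _ _ _ _) => X Be B0 E.
move: ((-1) ^+ size u) ((-1) ^+ size v) => su sv.
have BeE sg : (s ^+ 2 + 1) * Be = - s * (sg * X ^+ 3 - X) ->
    Be = - s * (sg * X ^+ 3 - X) / (s ^+ 2 + 1).
  by move=> hb; apply: (mulfI hs2); rewrite hb; field.
by case: (odd _); rewrite ?expr1 ?expr0 => /BeE ->; field; rewrite ?hs ?hs2.
Qed.

Lemma Vn_blockword_expand k ib ab u : (forall j, (j < k)%N -> (0 < ib j <= nn)%N) ->
  (s ^+ 2 + 1) ^+ k * Vn nn.+1 (u ++ blockword k ib ab) s =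
  bsum k (fun c => (\prod_(j < k) Pcoef (nth false c j) (ab j) s) *
                   Vn nn.+1 (u ++ blockword k ib (fun j => (nth false c j : nat)%:Z)) s).
Proof.
elim: k ib ab u => [|k IH] ib ab u hib; first by rewrite /= expr0 !mul1r big_ord0 mul1r.
have hib' j : (j < k)%N -> (0 < (ib \o succn) j <= nn)%N by move=> hj; apply: hib.
rewrite blockwordS exprS -mulrA mulrCA (Vn_gpow _ _ _ (hib 0%N isT)) mulrDr.
rewrite !mulrA ![_ * Pcoef _ _ _]mulrC -!mulrA IH // -cat_rcons IH //=.
rewrite !mulr_bsumr; congr (_ + _); apply: eq_bsum => c _;
  by rewrite big_ord_recl blockwordS ?cat_rcons -mulrA.
Qed.

Lemma Vn_pword_expand k (i : 'I_k.+1 -> nat) (a : 'I_k.+1 -> int) :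
  (forall j, (0 < i j <= nn)%N) ->
  (s ^+ 2 + 1) ^+ k.+1 * Vn nn.+1 (pword i a) s =
  \sum_(e : {ffun 'I_k.+1 -> bool})
     (\prod_(j < k.+1) Pcoef (e j) (a j) s) * Vn nn.+1 (pword i (fun j => (e j : nat)%:Z)) s.
Proof.
move=> hi; pose ib j := i (inord j); pose ab j := a (inord j).
have ibE (j : 'I_k.+1) : ib j = i j by rewrite /ib inord_val.
have abE (j : 'I_k.+1) : ab j = a j by rewrite /ab inord_val.
have nthE (e : {ffun 'I_k.+1 -> bool}) (j : 'I_k.+1) :
  nth false [seq e j | j <- enum 'I_k.+1] j = e j.
  by rewrite (nth_map j) ?size_enum_ord // nth_ord_enum.
rewrite (pword_blockword ibE abE) -(cat0s (blockword _ _ _)).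
rewrite Vn_blockword_expand => [|j _]; last exact: hi.
rewrite -sum_ffun_bsum; apply: eq_bigr => e _; congr (_ * _).
  by apply: eq_bigr => j _; rewrite nthE abE.
by rewrite cat0s; congr Vn; symmetry; apply: pword_blockword => // j; rewrite nthE.
Qed.

End Bracket.

Unset Implicit Arguments.

Theorem theorem1p2 (F : fieldType) (s : F) (hs : s != 0) (hs2 : s ^+ 2 + 1 != 0)
    (n k : nat) (hn : (2 <= n)%N) (hk : (1 <= k)%N)
    (i : 'I_k -> nat) (hi : forall j, (1 <= i j <= n.-1)%N) (a : 'I_k -> int) :
  Vn n (pword i a) s =
  ((s ^+ 2 + 1) ^+ k)^-1 *
  \sum_(e : {ffun 'I_k -> bool})
     (\prod_(j < k) Pcoef (e j) (a j) s) *
     Vn n (pword i (fun j => (e j : nat)%:Z)) s.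
Proof.
case: n hn hi => [|nn] // _ hi; case: k hk i hi a => [|k] // _ i hi a.
apply: (mulfI (expf_neq0 k.+1 hs2)).
by rewrite mulVKf ?expf_neq0 // Vn_pword_expand.
Qed.
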